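(* Let $\xi$ be a Hausdorff convergence. Then $\xi$ is symmetrizable if and only if $\xi$ is sequential and $\mathrm{I}_1\xi$ is a semi-metrizable pretopology.
   Context: A convergence $\xi$ on a set $X$ is a relation between filters on $X$ and points, $x\in\lim_\xi\mathcal{F}$, with $\mathcal{F}\le\mathcal{G}\Rightarrow\lim_\xi\mathcal{F}\subset\lim_\xi\mathcal{G}$ and $x\in\lim_\xi\{x\}^\uparrow$; $\xi\ge\theta$ means $\lim_\xi\mathcal{F}\subset\lim_\theta\mathcal{F}$ for all $\mathcal{F}$. Hausdorff: each filter has at most one limit. A set $O$ is $\xi$-open if $\lim_\xi\mathcal{F}\cap O\ne\emptyset\Rightarrow O\in\mathcal{F}$; $\mathrm{T}\xi$ is the topology of $\xi$-open sets. $x\in\lim_{\mathrm{I}_1\xi}\mathcal{F}$ iff there is a countably based filter $\mathcal{H}\le\mathcal{F}$ with $x\in\lim_\xi\mathcal{H}$. $\xi$ is sequential if $\xi\ge\mathrm{T}\mathrm{I}_1\xi$. A semi-metric on $X$ is $d:X\times X\to[0,\infty)$ symmetric with $d(x,y)=0\iff x=y$; $\tilde d$ is the pretopology in which $\mathcal{F}$ converges to $x$ iff $\mathcal{F}$ contains all balls $B(x,\epsilon)=\{y:d(x,y)<\epsilon\}$, $\epsilon>0$. $\xi$ is semi-metrizable if $\xi=\tilde d$ for some semi-metric $d$, and symmetrizable if $\tilde d\ge\xi\ge\mathrm{T}\tilde d$ for some semi-metric $d$ on $X$. *)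

From Stdlib Require Import Reals Classical.
Open Scope R_scope.
Set Implicit Arguments.

Definition Family (X : Type) := (X -> Prop) -> Prop.

Definition is_filter {X : Type} (F : Family X) : Prop :=
  F (fun _ => True) /\
  (forall A B : X -> Prop, F A -> (forall x, A x -> B x) -> F B) /\
  (forall A B : X -> Prop, F A -> F B -> F (fun x => A x /\ B x)) /\
  ~ F (fun _ => False).

Definition filter_le {X : Type} (F G : Family X) : Prop :=
  forall A, F A -> G A.

Definition principal {X : Type} (x : X) : Family X := fun A => A x.

(* a limit relation: Lim xi F x  means  x \in lim_xi F *)
Definition Lim (X : Type) := Family X -> X -> Prop.

Definition is_convergence {X : Type} (xi : Lim X) : Prop :=
  (forall F G x, is_filter F -> is_filter G -> filter_le F G -> xi F x -> xi G x) /\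
  (forall x, xi (principal x) x).

Definition conv_ge {X : Type} (xi th : Lim X) : Prop :=
  forall F, is_filter F -> forall x, xi F x -> th F x.

Definition conv_eq {X : Type} (xi th : Lim X) : Prop :=
  conv_ge xi th /\ conv_ge th xi.

Definition hausdorff {X : Type} (xi : Lim X) : Prop :=
  forall F, is_filter F -> forall x y, xi F x -> xi F y -> x = y.

Definition is_open {X : Type} (xi : Lim X) (O : X -> Prop) : Prop :=
  forall F, is_filter F -> forall x, xi F x -> O x -> F O.

Definition Tmod {X : Type} (xi : Lim X) : Lim X :=
  fun F x => forall O, is_open xi O -> O x -> F O.

Definition countably_based {X : Type} (H : Family X) : Prop :=
  exists B : nat -> X -> Prop,
    forall A, H A <-> exists n, forall y, B n y -> A y.

Definition I1 {X : Type} (xi : Lim X) : Lim X :=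
  fun F x => exists H, is_filter H /\ countably_based H /\ filter_le H F /\ xi H x.

Definition sequential {X : Type} (xi : Lim X) : Prop := conv_ge xi (Tmod (I1 xi)).

Definition vicinity {X : Type} (xi : Lim X) (x : X) : Family X :=
  fun A => forall F, is_filter F -> xi F x -> F A.

Definition pretopology {X : Type} (xi : Lim X) : Prop :=
  forall x, xi (vicinity xi x) x.

Definition is_semimetric {X : Type} (d : X -> X -> R) : Prop :=
  (forall x y, 0 <= d x y) /\
  (forall x y, d x y = d y x) /\
  (forall x y, d x y = 0 <-> x = y).

Definition ball {X : Type} (d : X -> X -> R) (x : X) (eps : R) : X -> Prop :=
  fun y => d x y < eps.

Definition tilde {X : Type} (d : X -> X -> R) : Lim X :=
  fun F x => forall eps, 0 < eps -> F (ball d x eps).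

Definition semi_metrizable {X : Type} (xi : Lim X) : Prop :=
  exists d, is_semimetric d /\ conv_eq xi (tilde d).

Definition symmetrizable {X : Type} (xi : Lim X) : Prop :=
  exists d, is_semimetric d /\ conv_ge (tilde d) xi /\ conv_ge xi (Tmod (tilde d)).

(* A symmetrizing semi-metric d has to make every countably based xi-convergent
   filter d-convergent: otherwise one extracts a sequence y_n -> x in xi staying
   outside a ball B(x, e).  By the Hausdorff property no other point z can be a
   d-cluster point of (y_n) (a filter finer than (y_n) and the balls at z would
   xi-converge to both x and z), so the complement of {y_n} is d~-open, contains x,
   and yet misses every tail of (y_n) -- contradicting xi >= T d~.  Hence
   I_1 xi = d~, and both directions follow from the monotonicity of T. *)
From Stdlib Require Import Reals Classical.
From Stdlib Require Import Lra Lia ClassicalEpsilon.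

Open Scope R_scope.

Lemma conv_ge_trans {X : Type} {xi th ze : Lim X} :
  conv_ge xi th -> conv_ge th ze -> conv_ge xi ze.
Proof. intros Hxt Htz F HF x Hx. exact (Htz F HF x (Hxt F HF x Hx)). Qed.

Lemma is_open_conv_ge {X : Type} {xi th : Lim X} {O : X -> Prop} :
  conv_ge xi th -> is_open th O -> is_open xi O.
Proof. intros Hge HO F HF x Hx. exact (HO F HF x (Hge F HF x Hx)). Qed.

Lemma Tmod_conv_ge {X : Type} {xi th : Lim X} :
  conv_ge xi th -> conv_ge (Tmod xi) (Tmod th).
Proof. intros Hge F _ x Hx O HO. exact (Hx O (is_open_conv_ge Hge HO)). Qed.

Lemma I1_filter_le {X : Type} {xi : Lim X} {F G : Family X} {x : X} :
  filter_le F G -> I1 xi F x -> I1 xi G x.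
Proof.
  intros HFG [H [HH [Hcb [HHF Hx]]]].
  exists H. split; [exact HH|]. split; [exact Hcb|]. split; [|exact Hx].
  intros A HA. exact (HFG A (HHF A HA)).
Qed.

Lemma I1_conv_ge {X : Type} {xi : Lim X} :
  is_convergence xi -> conv_ge (I1 xi) xi.
Proof.
  intros [Hiso _] F HF x [H [HH [_ [HHF Hx]]]]. exact (Hiso H F x HH HF HHF Hx).
Qed.

Definition filter_sup {X : Type} (F G : Family X) : Family X :=
  fun A => exists B C, F B /\ G C /\ forall x, B x -> C x -> A x.

Lemma filter_sup_filter {X : Type} {F G : Family X} :
  is_filter F -> is_filter G ->
  (forall B C, F B -> G C -> exists x, B x /\ C x) -> is_filter (filter_sup F G).
Proof.
  intros [FT [_ [FI _]]] [GT [_ [GI _]]] Hmesh.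
  split; [|split; [|split]].
  - exists (fun _ => True), (fun _ => True). auto.
  - intros A A' [B [C [HB [HC HA]]]] HAA'. exists B, C. auto.
  - intros A A' [B [C [HB [HC HA]]]] [B' [C' [HB' [HC' HA']]]].
    exists (fun x => B x /\ B' x), (fun x => C x /\ C' x).
    split; [|split]; auto. intros x [] []. auto.
  - intros [B [C [HB [HC HA]]]]. destruct (Hmesh B C HB HC) as [x [Bx Cx]].
    exact (HA x Bx Cx).
Qed.

Lemma filter_le_supl {X : Type} (F G : Family X) :
  is_filter G -> filter_le F (filter_sup F G).
Proof. intros [GT _] A HA. exists A, (fun _ => True). auto. Qed.

Lemma filter_le_supr {X : Type} (F G : Family X) :
  is_filter F -> filter_le G (filter_sup F G).
Proof. intros [FT _] A HA. exists (fun _ => True), A. auto. Qed.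

Lemma hausdorff_mesh_eq {X : Type} {xi : Lim X} {F G : Family X} {x z : X} :
  is_convergence xi -> hausdorff xi -> is_filter F -> is_filter G ->
  (forall B C, F B -> G C -> exists w, B w /\ C w) ->
  xi F x -> xi G z -> x = z.
Proof.
  intros [Hiso _] Hhaus HF HG Hmesh Hx Hz.
  pose proof (filter_sup_filter HF HG Hmesh) as HS.
  apply (Hhaus _ HS).
  - exact (Hiso F _ x HF HS (filter_le_supl F G HG) Hx).
  - exact (Hiso G _ z HG HS (filter_le_supr F G HF) Hz).
Qed.

Definition seq_filter {X : Type} (y : nat -> X) : Family X :=
  fun A => exists N, forall n, (N <= n)%nat -> A (y n).

Lemma seq_filter_filter {X : Type} (y : nat -> X) : is_filter (seq_filter y).
Proof.
  split; [|split; [|split]].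
  - exists 0%nat. auto.
  - intros A B [N HN] HAB. exists N. auto.
  - intros A B [N HN] [M HM]. exists (max N M). intros n Hn.
    split; [apply HN | apply HM]; lia.
  - intros [N HN]. exact (HN N (le_n N)).
Qed.

(* The partial intersections of a countable base are again in the filter and
   decrease, so a choice of points in them outside A defines a finer sequence. *)
Lemma countably_based_avoiding_seq {X : Type} {H : Family X} {A : X -> Prop} :
  is_filter H -> countably_based H -> ~ H A ->
  exists y : nat -> X, filter_le H (seq_filter y) /\ forall n, ~ A (y n).
Proof.
  intros [_ [Hup [Hint _]]] [B HB] HnA.
  set (C := fun n y => forall k, (k <= n)%nat -> B k y).
  assert (HC : forall n, H (C n)).
  { induction n as [|n IH].
    - apply (Hup (B 0%nat)); [apply HB; exists 0%nat; auto|].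
      intros y Hy k Hk. replace k with 0%nat by lia. exact Hy.
    - apply (Hup (fun y => C n y /\ B (S n) y)).
      + apply Hint; [exact IH | apply HB; exists (S n); auto].
      + intros y [Hy HyS] k Hk. destruct (Nat.eq_dec k (S n)) as [->|]; auto.
        apply Hy. lia. }
  assert (Hex : forall n, exists y, C n y /\ ~ A y).
  { intros n. apply NNPP. intros Hne. apply HnA. apply (Hup (C n) A (HC n)).
    intros y Hy. apply NNPP. intros HAy. apply Hne. eauto. }
  destruct (choice _ Hex) as [y Hy].
  exists y. split; [|intros n; apply Hy].
  intros A' HA'. apply HB in HA'. destruct HA' as [n Hn].
  exists n. intros m Hm. apply Hn, (proj1 (Hy m)). exact Hm.
Qed.

Lemma lower_bound_of_eventual_lower_bound (u : nat -> R) (N : nat) (eps : R) :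
  (forall n, 0 < u n) -> 0 < eps -> (forall n, (N <= n)%nat -> eps <= u n) ->
  exists del, 0 < del /\ forall n, del <= u n.
Proof.
  intros Hpos. revert eps. induction N as [|N IH]; intros eps Heps Hev.
  - exists eps. split; [exact Heps|]. intros n. apply Hev. lia.
  - apply (IH (Rmin eps (u N))).
    + apply Rmin_glb_lt; auto.
    + intros n Hn. destruct (Nat.eq_dec n N) as [->|].
      * apply Rmin_r.
      * eapply Rle_trans; [apply Rmin_l | apply Hev; lia].
Qed.

Definition ball_filter {X : Type} (d : X -> X -> R) (x : X) : Family X :=
  fun A => exists eps, 0 < eps /\ forall y, ball d x eps y -> A y.

Lemma tilde_ball_filter {X : Type} (d : X -> X -> R) (F : Family X) (x : X) :
  is_filter F -> (tilde d F x <-> filter_le (ball_filter d x) F).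
Proof.
  intros [_ [Hup _]]. split.
  - intros Hx A [eps [Heps HA]]. exact (Hup _ A (Hx eps Heps) HA).
  - intros Hle eps Heps. apply Hle. exists eps. auto.
Qed.

Lemma ball_filter_filter {X : Type} {d : X -> X -> R} (x : X) :
  is_semimetric d -> is_filter (ball_filter d x).
Proof.
  intros [_ [_ Hd0]]. split; [|split; [|split]].
  - exists 1. split; [lra | auto].
  - intros A B [eps [Heps HA]] HAB. exists eps. auto.
  - intros A B [e [He HA]] [e' [He' HB]]. exists (Rmin e e').
    split; [apply Rmin_glb_lt; auto|].
    intros y Hy. unfold ball in *. split.
    + apply HA. pose proof (Rmin_l e e'). lra.
    + apply HB. pose proof (Rmin_r e e'). lra.
  - intros [eps [Heps HF]]. apply (HF x). unfold ball.
    rewrite (proj2 (Hd0 x x) eq_refl). exact Heps.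
Qed.

Lemma ball_filter_countably_based {X : Type} (d : X -> X -> R) (x : X) :
  countably_based (ball_filter d x).
Proof.
  exists (fun n => ball d x (/ INR (S n))). intros A. split.
  - intros [eps [Heps HA]]. destruct (archimed_cor1 eps Heps) as [N [HN HN0]].
    exists (pred N). replace (S (pred N)) with N by lia.
    intros y Hy. apply HA. unfold ball in *. lra.
  - intros [n Hn]. exists (/ INR (S n)). split; [|exact Hn].
    apply Rinv_0_lt_compat, lt_0_INR. lia.
Qed.

Lemma tilde_open_of_balls {X : Type} (d : X -> X -> R) (U : X -> Prop) :
  (forall w, U w -> exists eps, 0 < eps /\ forall v, ball d w eps v -> U v) ->
  is_open (tilde d) U.
Proof.
  intros Hballs F HF w Hw Uw. apply (proj1 (tilde_ball_filter d F w HF) Hw).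
  exact (Hballs w Uw).
Qed.

Lemma tilde_conv_ge_I1 {X : Type} {xi : Lim X} {d : X -> X -> R} :
  is_semimetric d -> conv_ge (tilde d) xi -> conv_ge (tilde d) (I1 xi).
Proof.
  intros Hd Hge F HF x Hx.
  pose proof (ball_filter_filter x Hd) as HB.
  exists (ball_filter d x). split; [exact HB|]. split; [apply ball_filter_countably_based|].
  split; [exact (proj1 (tilde_ball_filter d F x HF) Hx)|].
  apply Hge; [exact HB|]. apply (tilde_ball_filter d _ x HB). intros A HA. exact HA.
Qed.

Lemma I1_pretopology {X : Type} {xi : Lim X} {d : X -> X -> R} :
  is_semimetric d -> conv_eq (I1 xi) (tilde d) -> pretopology (I1 xi).
Proof.
  intros Hd [HIt HtI] x.
  pose proof (ball_filter_filter x Hd) as HB.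
  apply (I1_filter_le (F := ball_filter d x)).
  - intros A HA F HF Hx. exact (proj1 (tilde_ball_filter d F x HF) (HIt F HF x Hx) A HA).
  - apply HtI; [exact HB|]. apply (tilde_ball_filter d _ x HB). intros A HA. exact HA.
Qed.

Section Symmetrizing.

Context {X : Type} {xi : Lim X} {d : X -> X -> R}.
Hypotheses (Hconv : is_convergence xi) (Hhaus : hausdorff xi) (Hd : is_semimetric d).
Hypothesis tilde_ge : conv_ge (tilde d) xi.

Lemma seq_limit_separated {y : nat -> X} {x z : X} :
  xi (seq_filter y) x -> z <> x -> (forall n, z <> y n) ->
  exists del, 0 < del /\ forall n, del <= d z (y n).
Proof.
  intros Hx Hzx Hzy.
  destruct Hd as [Hd_ge0 [_ Hd0]].
  pose proof (seq_filter_filter y) as HS.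
  pose proof (ball_filter_filter z Hd) as HB.
  assert (Hnomesh : ~ forall B C, seq_filter y B -> ball_filter d z C ->
                                  exists w, B w /\ C w).
  { intros Hmesh. apply Hzx. symmetry.
    apply (hausdorff_mesh_eq Hconv Hhaus HS HB Hmesh Hx).
    apply tilde_ge; [exact HB|]. apply (tilde_ball_filter d _ z HB). intros A HA. exact HA. }
  destruct (not_all_ex_not _ _ Hnomesh) as [B HB'].
  destruct (not_all_ex_not _ _ HB') as [C HC].
  apply imply_to_and in HC as [[N HN] HC].
  apply imply_to_and in HC as [[eps [Heps HCeps]] Hdisj].
  apply (lower_bound_of_eventual_lower_bound (fun n => d z (y n)) N eps).
  - intros n. destruct (Hd_ge0 z (y n)) as [|Heq]; [assumption|].
    exfalso. exact (Hzy n (proj1 (Hd0 _ _) (eq_sym Heq))).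
  - exact Heps.
  - intros n Hn. apply Rnot_lt_le. intros Hlt. apply Hdisj.
    exists (y n). split; [exact (HN n Hn) | exact (HCeps _ Hlt)].
Qed.

Hypothesis Tmod_le : conv_ge xi (Tmod (tilde d)).

Lemma countably_based_limit_tilde {H : Family X} {x : X} :
  is_filter H -> countably_based H -> xi H x -> tilde d H x.
Proof.
  intros HH Hcb Hx. apply NNPP. intros Hnx.
  destruct (not_all_ex_not _ _ Hnx) as [eps Heps].
  apply imply_to_and in Heps as [Heps Hnball].
  destruct (countably_based_avoiding_seq HH Hcb Hnball) as [y [HHy Hy]].
  pose proof (seq_filter_filter y) as HS.
  assert (Hxy : xi (seq_filter y) x) by exact (proj1 Hconv _ _ x HH HS HHy Hx).
  set (U := fun w => forall n, w <> y n).
  assert (HU : is_open (tilde d) U).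
  { apply tilde_open_of_balls. intros w Uw.
    destruct (classic (w = x)) as [->|Hwx].
    - exists eps. split; [exact Heps|]. intros v Hv n ->. exact (Hy n Hv).
    - destruct (seq_limit_separated Hxy Hwx Uw) as [del [Hdel Hsep]].
      exists del. split; [exact Hdel|]. intros v Hv n ->.
      unfold ball in Hv. specialize (Hsep n). lra. }
  assert (Ux : U x).
  { intros n Hxn. apply (Hy n). rewrite <- Hxn. unfold ball.
    rewrite (proj2 (proj2 (proj2 Hd) x x) eq_refl). exact Heps. }
  destruct (Tmod_le _ HS x Hxy U HU Ux) as [N HN].
  exact (HN N (le_n N) N eq_refl).
Qed.

Lemma I1_conv_ge_tilde : conv_ge (I1 xi) (tilde d).
Proof.
  intros F HF x [H [HH [Hcb [HHF Hx]]]] eps Heps.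
  exact (HHF _ (countably_based_limit_tilde HH Hcb Hx eps Heps)).
Qed.

End Symmetrizing.

Theorem corollary3p3 (X : Type) (xi : Lim X)
  (Hconv : is_convergence xi) (Hhaus : hausdorff xi) :
  symmetrizable xi <->
  (sequential xi /\ pretopology (I1 xi) /\ semi_metrizable (I1 xi)).
Proof.
  split.
  - intros [d [Hd [Hge Hle]]].
    assert (Heq : conv_eq (I1 xi) (tilde d)).
    { split.
      - exact (I1_conv_ge_tilde Hconv Hhaus Hd Hge Hle).
      - exact (tilde_conv_ge_I1 Hd Hge). }
    split; [|split].
    + exact (conv_ge_trans Hle (Tmod_conv_ge (proj2 Heq))).
    + exact (I1_pretopology Hd Heq).
    + exists d. split; assumption.
  - intros [Hseq [_ [d [Hd [HIt HtI]]]]].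
    exists d. split; [exact Hd|]. split.
    + exact (conv_ge_trans HtI (I1_conv_ge Hconv)).
    + exact (conv_ge_trans Hseq (Tmod_conv_ge HIt)).
Qed.
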